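(* Let $N\ge 0$ be an integer, let $q$ be a nonzero complex number with $q^j\neq 1$ for $1\le j\le N$, and let $a,b,c$ be complex numbers with $b,c\neq 0$, $b/c\notin\{q^{1-N},\dots,q^{N-1}\}$ and $bc\notin\{1,q^{-1},\dots,q^{1-N}\}$. Then, as polynomials in $x$, $$h_N(x;a)=\sum_{k=0}^N C_k^N(a,b,c)\,h_k(x;b)\,h_{N-k}(x;c),$$ where $$C_k^N(a,b,c)=q^{k(k-N)}\binom{N}{k}_q\frac{(a/c;q)_k\,(q^{N-k}ac;q)_k\,(a/b;q)_{N-k}\,(q^kab;q)_{N-k}}{(q^{k-N}b/c;q)_k\,(q^{-k}c/b;q)_{N-k}\,(bc;q)_N}.$$ Equivalently, with $x=\xi+\xi^{-1}$, $${}_8W_7(q^{-N}b/c;\,q^{-N},q^{1-N}/(ac),a/c,b\xi,b\xi^{-1};q,q)=\frac{(cb,c/b,a\xi,a\xi^{-1};q)_N}{(ab,a/b,c\xi,c\xi^{-1};q)_N}.$$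
   Context: $(a;q)_k=\prod_{j=0}^{k-1}(1-aq^j)$, $(a_1,\dots,a_n;q)_k=\prod_i(a_i;q)_k$, $\binom{N}{k}_q=\frac{(q;q)_N}{(q;q)_k(q;q)_{N-k}}$. $h_k(x;a)=\prod_{j=0}^{k-1}(1-axq^j+a^2q^{2j})=(a\xi,a\xi^{-1};q)_k$ where $\xi+\xi^{-1}=x$. Very-well-poised series: ${}_{r+1}W_r(a;b_1,\dots,b_{r-2};q,z)=\sum_{k\ge0}\frac{1-aq^{2k}}{1-a}\frac{(a,b_1,\dots,b_{r-2};q)_k}{(q,aq/b_1,\dots,aq/b_{r-2};q)_k}z^k$, which terminates when some $b_i=q^{-n}$, $n\in\mathbb Z_{\ge0}$. *)

From HB Require Import structures.
From mathcomp Require Import all_boot all_order all_algebra.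
From mathcomp Require Import complex.
From mathcomp Require Import reals.
Set Implicit Arguments. Unset Strict Implicit. Unset Printing Implicit Defensive.
Import Order.TTheory GRing.Theory Num.Theory.
Local Open Scope ring_scope.

Section QDefs.
Variable F : fieldType.

Definition qpoch (q a : F) (k : nat) : F := \prod_(j < k) (1 - a * q ^+ j).

Definition qbinom (q : F) (N k : nat) : F :=
  qpoch q q N / (qpoch q q k * qpoch q q (N - k)).

Definition hpoly (q : F) (k : nat) (a : F) : {poly F} :=
  \prod_(j < k) (1 - (a * q ^+ j) *: 'X + (a ^+ 2 * q ^+ (2 * j))%:P).

Definition Ccoef (q : F) (N k : nat) (a b c : F) : F :=
  q ^ ((k%:Z) * (k%:Z - N%:Z)) * qbinom q N k *
  (qpoch q (a / c) k * qpoch q (q ^+ (N - k) * a * c) k *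
   qpoch q (a / b) (N - k) * qpoch q (q ^+ k * a * b) (N - k)) /
  (qpoch q (q ^ (k%:Z - N%:Z) * b / c) k *
   qpoch q (q ^ (- k%:Z) * c / b) (N - k) * qpoch q (b * c) N).
End QDefs.

From HB Require Import structures.
From mathcomp Require Import all_boot all_order all_algebra.
From mathcomp Require Import complex.
From mathcomp Require Import reals.
From mathcomp Require Import ring zify.
Set Implicit Arguments. Unset Strict Implicit. Unset Printing Implicit Defensive.
Import Order.TTheory GRing.Theory Num.Theory.
Local Open Scope ring_scope.

(* Every factor 1 - t x + t^2 of h is affine in x, so the new
   factor at t = a q^N of h_{N+1}(x;a) is a combination of the factors at
   t = b q^k and t = c q^(N-k), by Cramer's rule with determinant
   (b q^k - c q^(N-k)) (1 - b c q^N); the hypotheses keep it nonzero.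
   Multiplying the expansion of h_N(x;a) by this factor, term by term, expands
   h_{N+1}(x;a) with coefficients obeying a Pascal-type recurrence, which the
   closed form C^N_k satisfies by a direct computation with q-shifted
   factorials. *)

Section QPochhammer.
Variable F : fieldType.
Implicit Types (q x y z : F) (m n : nat).

Lemma qpoch0 q x : qpoch q x 0 = 1.
Proof. by rewrite /qpoch big_ord0. Qed.

Lemma qpoch_recr q x n : qpoch q x n.+1 = qpoch q x n * (1 - x * q ^+ n).
Proof. by rewrite /qpoch big_ord_recr. Qed.

Lemma qpoch_recl q x n : qpoch q x n.+1 = (1 - x) * qpoch q (x * q) n.
Proof.
rewrite /qpoch big_ord_recl expr0 mulr1; congr (_ * _).
by apply: eq_bigr => i _; rewrite /bump /= exprS mulrA.
Qed.

Lemma qpoch_neq0 q x n :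
  (forall j, (j < n)%N -> 1 - x * q ^+ j != 0) -> qpoch q x n != 0.
Proof. by move=> nz; apply/prodf_neq0 => i _; apply: nz. Qed.

Lemma qpoch_recl_exp q y z m n :
  qpoch q (q ^+ n * y * z) m.+1 = (1 - q ^+ n * y * z) * qpoch q (q ^+ n.+1 * y * z) m.
Proof. by rewrite qpoch_recl exprSr; congr (_ * qpoch _ _ _); ring. Qed.

Lemma qpoch_recl_expN q y z m n : q != 0 -> z != 0 ->
  qpoch q (q ^- n.+1 * y / z) m.+1 = (1 - q ^- n.+1 * y / z) * qpoch q (q ^- n * y / z) m.
Proof.
move=> q_neq0 z_neq0; rewrite qpoch_recl; congr (_ * qpoch _ _ _).
by rewrite exprS; field; rewrite z_neq0 expf_neq0.
Qed.

Lemma qpoch_expN q y z m n : q != 0 -> z != 0 -> 1 - q ^- n.+1 * y / z * q ^+ m != 0 ->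
  qpoch q (q ^- n.+1 * y / z) m =
  (1 - q ^- n.+1 * y / z) * qpoch q (q ^- n * y / z) m / (1 - q ^- n.+1 * y / z * q ^+ m).
Proof.
by move=> q_neq0 z_neq0 nz; rewrite -qpoch_recl_expN // qpoch_recr mulfK.
Qed.

Lemma shift_ratio_neq0 q x y i j : q != 0 -> y != 0 -> x * q ^+ i != y * q ^+ j ->
  1 - q ^- j * x / y * q ^+ i != 0.
Proof.
move=> q_neq0 y_neq0; apply: contraNneq => /eqP; rewrite subr_eq0 => /eqP one_eq.
by apply/eqP; rewrite -[y * _]mulr1 one_eq; field; rewrite y_neq0 expf_neq0.
Qed.

Lemma Ccoef_addn q a b c k r :
  Ccoef q (k + r) k a b c = (q ^+ (k * r))^-1 * qbinom q (k + r) k *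
   (qpoch q (a / c) k * qpoch q (q ^+ r * a * c) k * qpoch q (a / b) r *
    qpoch q (q ^+ k * a * b) r) /
   (qpoch q (q ^- r * b / c) k * qpoch q (q ^- k * c / b) r *
    qpoch q (b * c) (k + r)).
Proof.
rewrite /Ccoef addKn.
have -> : k%:Z * (k%:Z - (k + r)%N%:Z) = - (k * r)%N%:Z by rewrite PoszD PoszM; ring.
have -> : k%:Z - (k + r)%N%:Z = - r%:Z by rewrite PoszD; ring.
by rewrite -!exprnN.
Qed.

Lemma Ccoef00 q a b c : Ccoef q 0 0 a b c = 1.
Proof. by rewrite /Ccoef /qbinom !qpoch0 mul0r expr0z !mulr1 invr1 !mulr1. Qed.

End QPochhammer.

Section LinearFactors.
Variable F : fieldType.
Implicit Types (q a b c : F) (j k r n : nat).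

Definition hfactor q j a : {poly F} :=
  1 - (a * q ^+ j) *: 'X + (a ^+ 2 * q ^+ (2 * j))%:P.

Lemma hpoly0 q a : hpoly q 0 a = 1.
Proof. by rewrite /hpoly big_ord0. Qed.

Lemma hpoly_recr q n a : hpoly q n.+1 a = hpoly q n a * hfactor q n a.
Proof. by rewrite /hpoly big_ord_recr. Qed.

Lemma hfactorE q j a :
  hfactor q j a = (1 + (a * q ^+ j) ^+ 2)%:P - (a * q ^+ j) *: 'X.
Proof. by rewrite /hfactor polyCD polyC1 addrAC exprMn -exprM mulnC. Qed.

Definition split_den q k r b c :=
  (b * q ^+ k - c * q ^+ r) * (1 - b * c * q ^+ (k + r)).
Definition split_coefb q k r a b c :=
  q ^+ r * (a * q ^+ k - c) * (1 - a * c * q ^+ r * q ^+ (k + r)) / split_den q k r b c.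
Definition split_coefc q k r a b c :=
  (b * q ^+ k - a * q ^+ (k + r)) * (1 - a * b * q ^+ (k + r) * q ^+ k) / split_den q k r b c.

Lemma hfactor_split q k r a b c : split_den q k r b c != 0 ->
  hfactor q (k + r) a =
  split_coefb q k r a b c *: hfactor q k b + split_coefc q k r a b c *: hfactor q r c.
Proof.
rewrite !hfactorE !scalerBr !scale_polyC !scalerA addrACA -opprD -scalerDl -polyCD.
rewrite /split_coefb /split_coefc /split_den !exprD mulf_eq0 negb_or.
move=> /andP[sep_neq0 prod_neq0].
by congr (_%:P - _ *: 'X); field; rewrite sep_neq0 prod_neq0.
Qed.

End LinearFactors.

Lemma big_ord_shift_merge (R : pzRingType) (V : lmodType R) (P : nat -> nat -> V)
    (f g : nat -> R) N :
  \sum_(k < N.+1) (f k *: P k.+1 (N - k)%N + g k *: P k (N - k).+1) =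
  \sum_(k < N.+2) ((if (k : nat) is k'.+1 then f k' else 0) + (if (k <= N)%N then g k else 0))
                    *: P k (N.+1 - k)%N.
Proof.
under [RHS]eq_bigr do rewrite scalerDl.
rewrite !big_split /=; congr (_ + _).
  by rewrite [RHS]big_ord_recl /= scale0r add0r; apply: eq_bigr => i _; rewrite subSS.
rewrite [RHS]big_ord_recr /= ltnn scale0r addr0; apply: eq_bigr => i _.
by rewrite -ltnS ltn_ord subSn // -ltnS ltn_ord.
Qed.

Lemma hpoly_expansion_step (F : fieldType) (q a b c : F) (N : nat) :
  (forall k, (k <= N)%N -> split_den q k (N - k) b c != 0) ->
  hpoly q N a = \sum_(k < N.+1) Ccoef q N k a b c *: (hpoly q k b * hpoly q (N - k) c) ->
  (forall k, (k < N.+2)%N -> Ccoef q N.+1 k a b c =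
      (if k is k'.+1 then split_coefb q k' (N - k') a b c * Ccoef q N k' a b c else 0) +
      (if (k <= N)%N then split_coefc q k (N - k) a b c * Ccoef q N k a b c else 0)) ->
  hpoly q N.+1 a =
    \sum_(k < N.+2) Ccoef q N.+1 k a b c *: (hpoly q k b * hpoly q (N.+1 - k) c).
Proof.
move=> den_neq0 expansionN Ccoef_rec.
pose P i j := hpoly q i b * hpoly q j c.
pose f k := split_coefb q k (N - k) a b c * Ccoef q N k a b c.
pose g k := split_coefc q k (N - k) a b c * Ccoef q N k a b c.
transitivity (\sum_(k < N.+1) (f k *: P k.+1 (N - k)%N + g k *: P k (N - k).+1)).
  rewrite hpoly_recr expansionN big_distrl /=; apply: eq_bigr => k _.
  have k_le : (k <= N)%N by rewrite -ltnS ltn_ord.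
  rewrite -[in hfactor q N a](subnKC k_le) (hfactor_split a (den_neq0 k k_le)).
  rewrite /P /f /g !hpoly_recr.
  by rewrite -!mul_polyC !polyCM; ring.
by rewrite big_ord_shift_merge; apply: eq_bigr => k _; rewrite Ccoef_rec.
Qed.

Section CoefficientRecurrence.
Variable F : fieldType.
Variables (q a b c : F) (N : nat).
Hypotheses (q_neq0 : q != 0) (b_neq0 : b != 0) (c_neq0 : c != 0).
Hypothesis q_nonroot : forall j, (0 < j <= N)%N -> q ^+ j != 1.
Hypothesis bc_ratio : forall i j, (i < N)%N -> (j < N)%N -> b * q ^+ i != c * q ^+ j.
Hypothesis bc_prod : forall j, (j < N)%N -> b * c * q ^+ j != 1.

Lemma expq_neq0 n : q ^+ n != 0.
Proof. exact: expf_neq0. Qed.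

Lemma onesub_qexpS_neq0 j : (j < N)%N -> 1 - q * q ^+ j != 0.
Proof. by move=> lt; rewrite -exprS subr_eq0 eq_sym q_nonroot. Qed.

Lemma qpoch_qq_neq0 n : (n <= N)%N -> qpoch q q n != 0.
Proof. by move=> le; apply: qpoch_neq0 => j lt; apply: onesub_qexpS_neq0; lia. Qed.

Lemma bc_sep_neq0 i j : (i < N)%N -> (j < N)%N -> b * q ^+ i - c * q ^+ j != 0.
Proof. by move=> ilt jlt; rewrite subr_eq0 bc_ratio. Qed.

Lemma bc_prod_neq0 j : (j < N)%N -> 1 - b * c * q ^+ j != 0.
Proof. by move=> lt; rewrite subr_eq0 eq_sym bc_prod. Qed.

Lemma qpoch_bc_neq0 n : (n <= N)%N -> qpoch q (b * c) n != 0.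
Proof. by move=> le; apply: qpoch_neq0 => j lt; apply: bc_prod_neq0; lia. Qed.

Lemma bc_shift_neq0 i j : (i < N)%N -> (j < N)%N -> 1 - q ^- j * b / c * q ^+ i != 0.
Proof. by move=> ilt jlt; rewrite shift_ratio_neq0 ?bc_ratio. Qed.

Lemma cb_shift_neq0 i j : (i < N)%N -> (j < N)%N -> 1 - q ^- j * c / b * q ^+ i != 0.
Proof. by move=> ilt jlt; rewrite shift_ratio_neq0 // eq_sym bc_ratio. Qed.

Lemma qpoch_bc_shift_neq0 j n : (j < N)%N -> (n <= N)%N ->
  qpoch q (q ^- j * b / c) n != 0.
Proof. by move=> lt le; apply: qpoch_neq0 => i ilt; apply: bc_shift_neq0; lia. Qed.

Lemma qpoch_cb_shift_neq0 j n : (j < N)%N -> (n <= N)%N ->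
  qpoch q (q ^- j * c / b) n != 0.
Proof. by move=> lt le; apply: qpoch_neq0 => i ilt; apply: cb_shift_neq0; lia. Qed.

Lemma Ccoef_first_rec M : (M < N)%N ->
  Ccoef q M.+1 0 a b c = split_coefc q 0 M a b c * Ccoef q M 0 a b c.
Proof.
move=> lt; have := Ccoef_addn q a b c 0 M.+1; rewrite add0n => ->.
have := Ccoef_addn q a b c 0 M; rewrite add0n => ->.
rewrite /qbinom !subn0 !qpoch0 !qpoch_recr.
rewrite /split_coefc /split_den !add0n !mul0n.
have sep_neq0 : b - c * q ^+ M != 0.
  by have := @bc_sep_neq0 0 M; rewrite expr0 mulr1; apply; lia.
field; rewrite qpoch_bc_neq0 ?qpoch_cb_shift_neq0 ?qpoch_qq_neq0 ?bc_prod_neq0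
  ?sep_neq0 ?onesub_qexpS_neq0 ?oner_neq0 ?b_neq0 //; lia.
Qed.

Lemma Ccoef_last_rec M : (M < N)%N ->
  Ccoef q M.+1 M.+1 a b c = split_coefb q M 0 a b c * Ccoef q M M a b c.
Proof.
move=> lt; have := Ccoef_addn q a b c M.+1 0; rewrite addn0 => ->.
have := Ccoef_addn q a b c M 0; rewrite addn0 => ->.
rewrite /qbinom !subnn !qpoch0 !qpoch_recr.
rewrite /split_coefb /split_den !addn0 !muln0.
have sep_neq0 : b * q ^+ M - c != 0.
  by have := @bc_sep_neq0 M 0 lt; rewrite expr0 mulr1; apply; lia.
have sep_neq0' : c - b * q ^+ M != 0 by rewrite -oppr_eq0 opprB.
field; rewrite qpoch_bc_neq0 ?qpoch_bc_shift_neq0 ?qpoch_qq_neq0 ?bc_prod_neq0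
  ?sep_neq0 ?sep_neq0' ?onesub_qexpS_neq0 ?oner_neq0 ?c_neq0 //; lia.
Qed.

Lemma Ccoef_inner_rec m r : (m.+1 + r.+1 <= N)%N ->
  Ccoef q (m.+1 + r.+1) m.+1 a b c =
  split_coefb q m r.+1 a b c * Ccoef q (m + r.+1) m a b c +
  split_coefc q m.+1 r a b c * Ccoef q (m.+1 + r) m.+1 a b c.
Proof.
move=> le; rewrite !Ccoef_addn /qbinom !addKn.
(* Write the three coefficients over the common factors (a/c;q)_m,
   (q^(r+1)ac;q)_m, (a/b;q)_r, (q^(m+1)ab;q)_r, (q^-r b/c;q)_m, (q^-m c/b;q)_r,
   peeling so that no factor involving a is ever divided by. *)
rewrite (qpoch_recr q (a / c) m) (qpoch_recl_exp q a c m r) (qpoch_recr q _ m).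
rewrite (qpoch_recr q (a / b) r) (qpoch_recl_exp q a b r m) (qpoch_recr q _ r).
rewrite (qpoch_recr q (q ^- r * b / c) m) (@qpoch_recl_expN _ q b c m r q_neq0 c_neq0).
rewrite (@qpoch_expN _ q b c m r q_neq0 c_neq0); last by apply: bc_shift_neq0; lia.
rewrite (qpoch_recr q (q ^- m * c / b) r) (@qpoch_recl_expN _ q c b r m q_neq0 b_neq0).
rewrite (@qpoch_expN _ q c b r m q_neq0 b_neq0); last by apply: cb_shift_neq0; lia.
rewrite !addSn !addnS !qpoch_recr /split_coefb /split_coefc /split_den.
rewrite !mulSn !mulnS !addnS !addSn !exprS !exprD.
(* The denominators, in the shapes [field] normalizes them to. *)
have sep1 : q * q ^+ m * b - c * q ^+ r != 0.
  by rewrite mulrC -exprS bc_sep_neq0 //; clear -le; lia.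
have sep2 : q * q ^+ m * b - c != 0.
  by rewrite mulrC -exprS -[c]mulr1 -(expr0 q) bc_sep_neq0 //; clear -le; lia.
have sep3 : q ^+ m * b - c * q ^+ r != 0.
  by rewrite mulrC bc_sep_neq0 //; clear -le; lia.
have sep4 : b * q ^+ m - c * (q * q ^+ r) != 0.
  by rewrite -exprS bc_sep_neq0 //; clear -le; lia.
have sep5 : q ^+ r * c - b * q ^+ m != 0.
  by rewrite -oppr_eq0 opprB [q ^+ r * c]mulrC bc_sep_neq0 //; clear -le; lia.
have sep6 : q * q ^+ r * c - b * q ^+ m != 0.
  by rewrite -oppr_eq0 opprB [_ * c]mulrC -exprS bc_sep_neq0 //; clear -le; lia.
have sep7 : q * q ^+ r * c - b != 0.
  by rewrite -oppr_eq0 opprB [_ * c]mulrC -exprS -[b]mulr1 -(expr0 q) bc_sep_neq0 //; clear -le; lia.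
have prod1 : 1 - b * c * (q ^+ m * q ^+ r) != 0.
  by rewrite -exprD bc_prod_neq0 //; clear -le; lia.
have prod2 : 1 - b * c * (q * (q ^+ m * q ^+ r)) != 0.
  by rewrite -exprD -exprS bc_prod_neq0 //; clear -le; lia.
field; rewrite sep1 sep2 sep3 sep4 sep5 sep6 sep7 prod1 prod2 !expq_neq0 b_neq0 c_neq0 q_neq0.
rewrite qpoch_bc_neq0 ?qpoch_bc_shift_neq0 ?qpoch_cb_shift_neq0 ?qpoch_qq_neq0 ?onesub_qexpS_neq0 //; clear -le; lia.
Qed.

Lemma Ccoef_rec M k : (M < N)%N -> (k < M.+2)%N ->
  Ccoef q M.+1 k a b c =
    (if k is k'.+1 then split_coefb q k' (M - k') a b c * Ccoef q M k' a b c else 0) +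
    (if (k <= M)%N then split_coefc q k (M - k) a b c * Ccoef q M k a b c else 0).
Proof.
move=> lt; case: k => [_|k]; first by rewrite add0r subn0 Ccoef_first_rec.
rewrite !ltnS leq_eqVlt => /orP[/eqP -> | k_lt].
  by rewrite ltnn addr0 subnn Ccoef_last_rec.
have [r def_M] : exists r, M = (k.+1 + r)%N by exists (M - k.+1)%N; rewrite subnKC.
have -> : (M - k = r.+1)%N by rewrite def_M addSnnS addKn.
rewrite k_lt def_M addKn -[(k.+1 + r).+1]addnS Ccoef_inner_rec ?addSnnS //.
by rewrite -addSnnS addnS -def_M.
Qed.

Lemma hpoly_expansion_le M : (M <= N)%N ->
  hpoly q M a = \sum_(k < M.+1) Ccoef q M k a b c *: (hpoly q k b * hpoly q (M - k) c).
Proof.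
elim: M => [_|M IH lt]; first by rewrite big_ord1 !hpoly0 Ccoef00 scale1r mulr1.
apply: hpoly_expansion_step => [k k_le||k]; last exact: Ccoef_rec.
  by rewrite mulf_neq0 ?bc_sep_neq0 ?subnKC ?bc_prod_neq0 //; clear -lt k_le; lia.
exact/IH/ltnW.
Qed.

End CoefficientRecurrence.

Lemma bc_ratio_of_exprz (F : fieldType) (q b c : F) (N : nat) : q != 0 -> c != 0 ->
  (forall m : int, 1 - N%:Z <= m <= N%:Z - 1 -> b / c != q ^ m) ->
  forall i j, (i < N)%N -> (j < N)%N -> b * q ^+ i != c * q ^+ j.
Proof.
move=> q_neq0 c_neq0 ratio_ne i j ilt jlt; apply: contraNneq (ratio_ne (j%:Z - i%:Z) _).
  move=> eq_bc; rewrite expfzDr // -exprnN -exprnP.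
  by rewrite eqr_div ?expf_neq0 // eq_bc mulrC.
by apply/andP; split; lia.
Qed.

Lemma bc_prod_of_exprz (F : fieldType) (q b c : F) (N : nat) : q != 0 ->
  (forall j : nat, (j < N)%N -> b * c != q ^ (- j%:Z)) ->
  forall j, (j < N)%N -> b * c * q ^+ j != 1.
Proof.
move=> q_neq0 prod_ne j jlt; apply: contraNneq (prod_ne j jlt) => eq_bc.
by rewrite -exprnN -div1r -eq_bc mulfK ?expf_neq0.
Qed.

Local Open Scope complex_scope.

Theorem mainTheorem2 (R : realType) (N : nat) (q a b c : R[i]) :
  q != 0 ->
  (forall j : nat, (1 <= j <= N)%N -> q ^+ j != 1) ->
  b != 0 -> c != 0 ->
  (forall m : int, 1 - N%:Z <= m <= N%:Z - 1 -> b / c != q ^ m) ->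
  (forall j : nat, (j < N)%N -> b * c != q ^ (- j%:Z)) ->
  hpoly q N a =
    \sum_(k < N.+1) (Ccoef q N k a b c) *: (hpoly q k b * hpoly q (N - k) c).
Proof.
move=> q_neq0 q_nonroot b_neq0 c_neq0 ratio_ne prod_ne.
apply: (hpoly_expansion_le a q_neq0 b_neq0 c_neq0 q_nonroot) (leqnn N).
  exact: bc_ratio_of_exprz.
exact: bc_prod_of_exprz.
Qed.
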